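(* A set $\mathcal{X}\subseteq\mathbb{Z}_2^\omega$ is a xor-set if and only if there exists a selector $\mathcal{S}$ of the family $\mathcal{P}$ (i.e. a set $\mathcal{S}$ containing exactly one element of each pair in $\mathcal{P}$) such that $\mathcal{X}=\bigcup\mathcal{S}$.
   Context: $\mathbb{Z}_2^\omega$ is the set of infinite binary sequences indexed by $\omega=\{0,1,2,\dots\}$. The Hamming distance is $\mathrm{hd}(x,y)=|\{k: x(k)\ne y(k)\}|\in\omega\cup\{\omega\}$; $x\sim y$ iff $\mathrm{hd}(x,y)$ is finite, and $x\approx y$ iff $\mathrm{hd}(x,y)$ is finite and even. Each equivalence class $C$ of $\sim$ is the union of exactly two equivalence classes $U_0(C),U_1(C)$ of $\approx$; let $\mathcal{P}=\{\{U_0(C),U_1(C)\}: C\in\mathbb{Z}_2^\omega/_\sim\}$. For $x\in\mathbb{Z}_2^\omega$ and $n\in\omega$, $x^{\#n}$ is the sequence obtained from $x$ by flipping the $n$-th coordinate ($x^{\#n}(k)=x(k)$ for $k\ne n$, $x^{\#n}(n)=1-x(n)$). A set $\mathcal{X}\subseteq\mathbb{Z}_2^\omega$ is a xor-set if for every $n\in\omega$ and $x\in\mathbb{Z}_2^\omega$: $x\in\mathcal{X}\iff x^{\#n}\notin\mathcal{X}$. *)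

From mathcomp Require Import all_boot.
Set Implicit Arguments. Unset Strict Implicit. Unset Printing Implicit Defensive.

Definition seq2 := nat -> bool.
Definition pset (T : Type) := T -> Prop.

(* hd x y = n (finite): the set of differing coordinates is listed
   without repetition by a sequence of length n *)
Definition hd_eq (x y : seq2) (n : nat) : Prop :=
  exists s : seq nat, uniq s /\ (forall k, k \in s <-> x k != y k) /\ size s = n.

(* x ~ y : hd finite;  x ≈ y : hd finite and even *)
Definition sim (x y : seq2) : Prop := exists n, hd_eq x y n.
Definition approx (x y : seq2) : Prop := exists n, hd_eq x y n /\ ~~ odd n.

Definition sim_class (C : pset seq2) : Prop := exists x, C = (fun y => sim x y).
Definition approx_class (U : pset seq2) : Prop := exists x, U = (fun y => approx x y).

(* P = { {U0(C),U1(C)} : C a ~-class }, where {U0(C),U1(C)} is the set of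
   ≈-classes contained in C *)
Definition Pfam : pset (pset (pset seq2)) :=
  fun p => exists C, sim_class C /\ p = (fun U => approx_class U /\ forall y, U y -> C y).

Definition selector (T : Type) (F : pset (pset T)) (S : pset T) : Prop :=
  (forall U, S U -> exists p, F p /\ p U) /\
  (forall p, F p -> exists! U, p U /\ S U).

Definition bigU (S : pset (pset seq2)) : pset seq2 := fun x => exists U, S U /\ U x.

Definition flip (x : seq2) (n : nat) : seq2 :=
  fun k => if k == n then ~~ x n else x k.

Definition xor_set (X : pset seq2) : Prop :=
  forall (n : nat) (x : seq2), X x <-> ~ X (flip x n).

From Stdlib Require Import Classical FunctionalExtensionality PropExtensionality.
From Pilot Require Import Defs.
From mathcomp Require Import all_boot.
Set Implicit Arguments. Unset Strict Implicit.

(* Two sequences at finite Hamming distance agree from some index N on, and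
   the parity of the number of differences below N then measures whether
   they are ≈-equivalent.  A xor-set changes membership at every single flip,
   so it is a union of ≈-classes, and since x and x^{#n} are ~-equivalent but
   not ≈-equivalent it contains exactly one of the two ≈-classes of every
   ~-class.  Conversely, for the union of a selector, x and x^{#n} lie in the
   two different ≈-classes of one ~-class, exactly one of which is selected. *)

Definition agree_from (N : nat) (x y : seq2) : Prop := forall k, N <= k -> x k = y k.

Fixpoint ndiff (x y : seq2) (N : nat) : nat :=
  if N is N'.+1 then ndiff x y N' + (x N' != y N') else 0.

Lemma agree_from_sym N x y : agree_from N x y -> agree_from N y x.
Proof. by move=> xy k /xy ->. Qed.

Lemma agree_from_trans N M x y z :
  agree_from N x y -> agree_from M y z -> agree_from (maxn N M) x z.
Proof. by move=> xy yz k; rewrite geq_max => /andP[/xy -> /yz ->]. Qed.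

Lemma agree_from_leq N M x y : N <= M -> agree_from N x y -> agree_from M x y.
Proof. by move=> le_NM xy k le_Mk; apply/xy/(leq_trans le_NM). Qed.

Lemma count_neq_iota x y N : count (fun k => x k != y k) (iota 0 N) = ndiff x y N.
Proof. by elim: N => // N IH; rewrite -addn1 iotaD count_cat IH addn1 /= add0n !addn0. Qed.

Lemma ndiff_xx x N : ndiff x x N = 0.
Proof. by elim: N => //= N ->; rewrite eqxx. Qed.

Lemma ndiff_sym x y N : ndiff x y N = ndiff y x N.
Proof. by elim: N => //= N ->; rewrite eq_sym. Qed.

Lemma ndiff_agree_from N M x y : agree_from N x y -> N <= M -> ndiff x y M = ndiff x y N.
Proof.
move=> xy; elim: M => [|M IH]; first by rewrite leqn0 => /eqP ->.
rewrite leq_eqVlt => /orP[/eqP <- // | le_NM] /=.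
by rewrite IH // xy // eqxx addn0.
Qed.

Lemma odd_ndiff_trans x y z N :
  odd (ndiff x z N) = odd (ndiff x y N) (+) odd (ndiff y z N).
Proof.
elim: N => //= N IH; rewrite !oddD IH.
by case: (x N); case: (y N); case: (z N); case: (odd (ndiff x y N)); case: (odd _).
Qed.

Lemma hd_eq_agree_from x y n : hd_eq x y n -> exists N, agree_from N x y /\ n = ndiff x y N.
Proof.
move=> [s [uniq_s [mem_s <-]]]; exists (\max_(k <- s) k).+1.
have bound_s k : k \in s -> k <= \max_(k <- s) k by move=> sk; apply: leq_bigmax_seq.
split.
  by move=> k lt_k; apply/eqP/negPn/negP => /mem_s/bound_s; rewrite leqNgt lt_k.
rewrite -count_neq_iota -size_filter; apply/perm_size/uniq_perm => //.
  by rewrite filter_uniq // iota_uniq.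
move=> k; rewrite mem_filter mem_iota add0n ltnS.
apply/idP/andP => [sk | [/mem_s //]]; split; [exact/mem_s | exact: bound_s].
Qed.

Lemma agree_from_hd_eq N x y : agree_from N x y -> hd_eq x y (ndiff x y N).
Proof.
move=> xy; exists [seq k <- iota 0 N | x k != y k]; split; last split.
- by rewrite filter_uniq // iota_uniq.
- move=> k; rewrite mem_filter mem_iota add0n; split => [/andP[] // | neq_k].
  by rewrite neq_k ltnNge; apply/negP => /xy; apply/eqP.
- by rewrite size_filter count_neq_iota.
Qed.

Lemma simE x y : sim x y <-> exists N, agree_from N x y.
Proof.
split => [[n /hd_eq_agree_from [N [xy _]]] | [N /agree_from_hd_eq xy]]; first by exists N.
by exists (ndiff x y N).
Qed.

Lemma approxE x y : approx x y <-> exists N, agree_from N x y /\ ~~ odd (ndiff x y N).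
Proof.
split => [[n [/hd_eq_agree_from [N [xy ->]] even_n]] | [N [/agree_from_hd_eq xy even_n]]].
  by exists N.
by exists (ndiff x y N).
Qed.

Lemma approx_refl x : approx x x.
Proof. by apply/approxE; exists 0. Qed.

Lemma approx_sym x y : approx x y -> approx y x.
Proof.
by move=> /approxE [N [xy even_xy]]; apply/approxE; exists N; rewrite ndiff_sym; split => //;
  apply: agree_from_sym.
Qed.

Lemma approx_trans x y z : approx x y -> approx y z -> approx x z.
Proof.
move=> /approxE [N [xy even_xy]] /approxE [M [yz even_yz]]; apply/approxE.
exists (maxn N M); split; first exact: agree_from_trans xy yz.
rewrite (odd_ndiff_trans _ y) (ndiff_agree_from xy (leq_maxl N M)).
by rewrite (ndiff_agree_from yz (leq_maxr N M)) (negbTE even_xy) (negbTE even_yz).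
Qed.

Lemma approx_sim x y : approx x y -> sim x y.
Proof. by move=> [n [xy _]]; exists n. Qed.

Lemma sim_sym x y : sim x y -> sim y x.
Proof. by move=> /simE [N /agree_from_sym yx]; apply/simE; exists N. Qed.

Lemma sim_trans x y z : sim x y -> sim y z -> sim x z.
Proof.
by move=> /simE [N xy] /simE [M yz]; apply/simE; exists (maxn N M); apply: agree_from_trans xy yz.
Qed.

Lemma approx_class_eq x y : approx x y -> approx x = approx y.
Proof.
move=> xy; apply: functional_extensionality => z; apply: propositional_extensionality.
by split; [apply/approx_trans/approx_sym | apply: approx_trans].
Qed.

Lemma agree_from_flip x n : agree_from n.+1 x (flip x n).
Proof. by move=> k lt_nk; rewrite /flip gtn_eqF. Qed.

Lemma odd_ndiff_flip x y n N :
  odd (ndiff (flip x n) y N) = (n < N) (+) odd (ndiff x y N).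
Proof.
elim: N => //= N IH; rewrite !oddD IH /flip ltnS.
case: (ltngtP N n) => [_ | _ | ->]; rewrite ?eqxx;
  by case: (odd (ndiff x y _)); case: (x _); case: (y _).
Qed.

Lemma sim_flip x n : sim x (flip x n).
Proof. by apply/simE; exists n.+1; apply: agree_from_flip. Qed.

Lemma not_approx_flip x n : ~ approx x (flip x n).
Proof.
move=> /approxE [N [x_flip even_N]].
have [lt_nN | le_Nn] := ltnP n N.
  by move: even_N; rewrite ndiff_sym odd_ndiff_flip lt_nN ndiff_xx.
by move: (x_flip n le_Nn); rewrite /flip eqxx; case: (x n).
Qed.

Lemma sim_approx_or_flip x z n : sim x z -> approx x z \/ approx (flip x n) z.
Proof.
move=> /simE [N xz]; pose M := maxn N n.+1.
have xzM : agree_from M x z by apply: agree_from_leq xz; apply: leq_maxl.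
case even_xz: (~~ odd (ndiff x z M)); [left | right]; apply/approxE.
  by exists M.
exists (maxn n.+1 M); split.
  exact/agree_from_trans/xzM/agree_from_sym/agree_from_flip.
rewrite odd_ndiff_flip (ndiff_agree_from xzM (leq_maxr _ _)).
by rewrite (leq_trans (ltnSn n) (leq_maxl _ _)); move: even_xz; case: (odd _).
Qed.

Section XorSet.

Variable X : pset seq2.
Hypothesis X_xor : xor_set X.

Lemma xor_set_ndiff N x y :
  agree_from N x y -> X y <-> (if odd (ndiff x y N) then ~ X x else X x).
Proof.
elim: N x => [|N IH] x xy /=.
  by have -> : x = y by apply: functional_extensionality => k; apply: xy.
have [xyN | xyN] := eqVneq (x N) (y N).
  by rewrite addn0; apply: IH => k; rewrite leq_eqVlt => /orP[/eqP <- | /xy].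
have flip_xy : agree_from N (flip x N) y.
  move=> k; rewrite leq_eqVlt /flip => /orP[/eqP <- | lt_Nk]; last by rewrite gtn_eqF // xy.
  by rewrite eqxx; move: xyN; case: (x N); case: (y N).
rewrite (IH _ flip_xy) odd_ndiff_flip ltnn addn1 /=.
by have := X_xor N x; case: (odd _) => /=; case: (classic (X (flip x N))); tauto.
Qed.

Lemma xor_set_approx_closed x y : X x -> approx x y -> X y.
Proof.
by move=> Xx /approxE [N [xy even_xy]]; apply/(xor_set_ndiff xy); rewrite (negbTE even_xy).
Qed.

Lemma xor_set_sim_approx x y : X x -> X y -> sim x y -> approx x y.
Proof.
move=> Xx Xy /(sim_approx_or_flip 0) [// | flip_y].
have := X_xor 0 x; move: (xor_set_approx_closed Xy (approx_sym flip_y)); tauto.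
Qed.

Lemma xor_set_meets_sim_class c : exists z, X z /\ sim c z.
Proof.
case: (classic (X c)) => Xc; first by exists c; split; last exact/approx_sim/approx_refl.
exists (flip c 0); split; last exact: sim_flip.
by have := X_xor 0 c; case: (classic (X (flip c 0))); tauto.
Qed.

End XorSet.

Definition approx_classes_in (c : seq2) : pset (pset seq2) :=
  fun U => approx_class U /\ forall y, U y -> sim c y.

Lemma Pfam_approx_classes_in c : Pfam (approx_classes_in c).
Proof. by exists (sim c); split => //; exists c. Qed.

Lemma approx_classes_in_sim c x : sim c x -> approx_classes_in c (approx x).
Proof. by move=> cx; split; [exists x | move=> y /approx_sim; apply: sim_trans]. Qed.

Lemma approx_classes_inP c U : approx_classes_in c U -> exists2 z, U = approx z & sim c z.
Proof. by move=> [[z ->] sub]; exists z; last exact/sub/approx_refl. Qed.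

(* Unqualified, [bigU] would be the bigop lemma of that name. *)
Lemma bigU_selector S x : selector Pfam S -> Defs.bigU S x <-> S (approx x).
Proof.
move=> [S_Pfam _]; split => [[U [SU Ux]] | Sx].
  have [p [[C [_ ->]] [[z ez] _]]] := S_Pfam _ SU.
  by subst U; rewrite -(approx_class_eq Ux).
by exists (approx x); split; last exact: approx_refl.
Qed.

Lemma xor_set_selector X :
  xor_set X -> exists S, selector Pfam S /\ X = Defs.bigU S.
Proof.
move=> X_xor; exists (fun U => exists2 x, X x & U = approx x).
split; [split|].
- move=> U [x _ ->]; exists (approx_classes_in x).
  by split; [apply: Pfam_approx_classes_in | apply/approx_classes_in_sim/approx_sim/approx_refl].
- move=> p [C [[c ->] ->]].
  have [z [Xz cz]] := xor_set_meets_sim_class X_xor c.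
  exists (approx z); split; first by split; [apply: approx_classes_in_sim | exists z].
  move=> U [[_ sub] [x Xx eU]]; subst U.
  apply/approx_class_eq/(xor_set_sim_approx X_xor) => //.
  exact: sim_trans (sim_sym cz) (sub x (approx_refl x)).
- apply: functional_extensionality => y; apply: propositional_extensionality.
  split => [Xy | [U [[x Xx ->] xy]]]; last exact: xor_set_approx_closed xy.
  by exists (approx y); split; [exists y | apply: approx_refl].
Qed.

Lemma selector_xor_set S : selector Pfam S -> xor_set (Defs.bigU S).
Proof.
move=> sel n x; rewrite !(bigU_selector _ sel).
have [_ /(_ _ (Pfam_approx_classes_in x)) [U [[xU SU] U_uniq]]] := sel.
have x_in := approx_classes_in_sim (approx_sim (approx_refl x)).
have flip_in := approx_classes_in_sim (sim_flip x n).
split => [Sx Sflip | not_Sflip].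
  have x_flip := etrans (esym (U_uniq _ (conj x_in Sx))) (U_uniq _ (conj flip_in Sflip)).
  by apply: (@not_approx_flip x n); rewrite x_flip; apply: approx_refl.
have [z eU xz] := approx_classes_inP xU; rewrite eU in SU.
have [xz' | flip_z] := sim_approx_or_flip n xz; first by rewrite (approx_class_eq xz').
by case: not_Sflip; rewrite (approx_class_eq flip_z).
Qed.

Theorem lemma12 (X : pset seq2) :
  xor_set X <-> exists S : pset (pset seq2), Defs.selector Pfam S /\ X = Defs.bigU S.
Proof.
split; first exact: xor_set_selector.
by move=> [S [sel ->]]; apply: selector_xor_set.
Qed.
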